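(* For any integers $b \ge 2$ and $n \ge 1$, let $X_0,\dots,X_{n-1}$ be produced by the balanced base-$b$ enumeration procedure described in the context, and for $\ell \in \{1,\dots,L\}$ and $d \in \{0,\dots,b-1\}$ let $c_{\ell,d}(n) = |\{k \in \{0,\dots,n-1\} : (X_k)_\ell = d\}|$. Then $\max_{\ell,d} c_{\ell,d}(n) - \min_{\ell,d} c_{\ell,d}(n) \le 1$. Equivalently, for each $\ell$, every digit $d$ appears either $\lfloor n/b \rfloor$ or $\lceil n/b \rceil$ times in position $\ell$ among $X_0,\dots,X_{n-1}$.
   Context: Balanced base-$b$ enumeration: given $b \ge 2$ and $n \ge 1$, let $L = \min\{\ell \ge 1 : b^\ell \ge n\}$. For $t = 0,1,\dots,b^{L-1}-1$ in increasing order, let $(j_2,\dots,j_L) \in \{0,\dots,b-1\}^{L-1}$ be the unique digits with $t = \sum_{r=2}^L j_r b^{L-r}$ (base-$b$ representation left-padded with zeros), and for $i = 0,1,\dots,b-1$ in increasing order output the vector $\bigl(i, (i+j_2) \bmod b, \dots, (i+j_L) \bmod b\bigr) \in \{0,\dots,b-1\}^L$. The outputs are indexed $X_0, X_1, \dots$ in the order produced, and the procedure stops as soon as $n$ vectors $X_0,\dots,X_{n-1}$ have been produced. $(X_k)_\ell$ denotes the $\ell$-th coordinate of $X_k$. *)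

From mathcomp Require Import all_boot.
Set Implicit Arguments. Unset Strict Implicit. Unset Printing Implicit Defensive.

(* The k-th output (0-indexed) is produced at
   outer index t = k %/ b and inner index i = k %% b.  The digits of t are
   j_r = (t %/ b^(L-r)) %% b for r = 2..L (base-b, left-padded to L-1 digits).
   [bal_coord b L k l] is the coordinate (X_k)_l, with l 1-indexed in 1..L:
   (X_k)_1 = i and (X_k)_l = (i + j_l) mod b for l >= 2. *)
Definition bal_coord (b L k l : nat) : nat :=
  let i := k %% b in
  let t := k %/ b in
  if l == 1 then i else (i + (t %/ b ^ (L - l)) %% b) %% b.

Definition bal_X (b L k : nat) : seq nat := [seq bal_coord b L k l | l <- iota 1 L].

Definition bal_count (b L n l d : nat) : nat :=
  count (fun k => nth 0 (bal_X b L k) l.-1 == d) (iota 0 n).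

From mathcomp Require Import all_boot.
From mathcomp Require Import zify.

(* Every coordinate of X_k has the form (k mod b + f (k div b)) mod b for some
   offset function f.  On a block of b consecutive indices sharing k div b, the
   map k |-> (k mod b + c) mod b is a bijection onto the digits, so every digit
   occurs exactly once per complete block.  Hence among the first n indices each
   digit occurs n div b times, plus at most once more in the final partial
   block. *)

Lemma perm_iota_addn_mod b c :
  0 < b -> perm_eq [seq (i + c) %% b | i <- iota 0 b] (iota 0 b).
Proof.
move=> b_gt0.
have map_uniq : uniq [seq (i + c) %% b | i <- iota 0 b].
  rewrite map_inj_in_uniq ?iota_uniq // => i j; rewrite !mem_iota !add0n.
  by move=> ib jb /eqP; rewrite eqn_modDr !modn_small // => /eqP.
apply: uniq_perm; rewrite ?iota_uniq //.
apply: (uniq_min_size _ _ _).2; rewrite ?size_map //.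
by move=> _ /mapP[i _ ->]; rewrite mem_iota add0n ltn_mod.
Qed.

Section ShiftedDigit.
Variables (b : nat) (f : nat -> nat).
Hypothesis b_gt0 : 0 < b.

Definition shifted_digit (k : nat) : nat := (k %% b + f (k %/ b)) %% b.

Lemma count_shifted_digit_block t d : d < b ->
  count (fun k => shifted_digit k == d) (iota (t * b) b) = 1.
Proof.
move=> db; rewrite -[t * b]addn0 iotaDl count_map.
have shiftE i : i \in iota 0 b -> shifted_digit (t * b + i) = (i + f t) %% b.
  rewrite mem_iota add0n => /andP[_ ib].
  by rewrite /shifted_digit modnMDl divnMDl // divn_small // addn0 (modn_small ib).
rewrite (eq_in_count (a2 := pred1 d \o (fun i => (i + f t) %% b))); last first.
  by move=> i /shiftE /= ->.
rewrite -count_map (permP (perm_iota_addn_mod b (f t) b_gt0)).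
by rewrite count_uniq_mem ?iota_uniq // mem_iota add0n db.
Qed.

Lemma count_shifted_digit_blocks q d : d < b ->
  count (fun k => shifted_digit k == d) (iota 0 (q * b)) = q.
Proof.
move=> db; elim: q => [|q IHq]; first by rewrite mul0n.
by rewrite mulSn addnC iotaD count_cat IHq add0n count_shifted_digit_block // addn1.
Qed.

Lemma count_shifted_digit_bounds n d : d < b ->
  n %/ b <= count (fun k => shifted_digit k == d) (iota 0 n) <= (n %/ b).+1.
Proof.
move=> db; rewrite [in iota 0 n](divn_eq n b) iotaD count_cat add0n.
rewrite count_shifted_digit_blocks // leq_addr /= -addn1 leq_add2l.
rewrite -(count_shifted_digit_block (n %/ b) d db).
have /subnKC split_b : n %% b <= b by rewrite ltnW // ltn_mod.
by rewrite -[X in _ <= count _ (iota _ X)]split_b iotaD count_cat leq_addr.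
Qed.

End ShiftedDigit.

Definition bal_offset (b L l t : nat) : nat :=
  if l == 1 then 0 else (t %/ b ^ (L - l)) %% b.

Lemma bal_coordE b L l k :
  bal_coord b L k l = shifted_digit b (bal_offset b L l) k.
Proof.
by rewrite /bal_coord /shifted_digit /bal_offset; case: eqP; rewrite ?addn0 ?modn_mod.
Qed.

Lemma bal_countE b L n l d : 1 <= l <= L ->
  bal_count b L n l d =
  count (fun k => shifted_digit b (bal_offset b L l) k == d) (iota 0 n).
Proof.
move=> /andP[l_ge1 l_leL]; apply: eq_count => k.
rewrite /bal_X (nth_map 0) ?size_iota; last by lia.
rewrite nth_iota; last by lia.
by rewrite add1n prednK // bal_coordE.
Qed.

Theorem theoremA2 (b n L : nat) (hb : 2 <= b) (hn : 1 <= n)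
  (hL1 : 1 <= L) (hLn : n <= b ^ L)
  (hLmin : forall l, 1 <= l -> n <= b ^ l -> L <= l) :
  forall l1 d1 l2 d2, 1 <= l1 <= L -> d1 < b -> 1 <= l2 <= L -> d2 < b ->
    bal_count b L n l1 d1 <= bal_count b L n l2 d2 + 1.
Proof.
move=> l1 d1 l2 d2 hl1 hd1 hl2 hd2.
have b_gt0 : 0 < b by lia.
rewrite !bal_countE //.
have := @count_shifted_digit_bounds b (bal_offset b L l1) b_gt0 n d1 hd1.
have := @count_shifted_digit_bounds b (bal_offset b L l2) b_gt0 n d2 hd2.
lia.
Qed.
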